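(* For all integers $n\ge 2$ and $k\ge 0$, $$e(n,k)=e(n-2,k)+\binom{n-2}{k-1}+o(n-2,k-2),\qquad o(n,k)=o(n-2,k)+\binom{n-2}{k-1}+e(n-2,k-2),$$ where $e(m,k)=o(m,k)=0$ for $k<0$ and $\binom{m}{k}=0$ for $k<0$ or $k>m$.
   Context: For $S\subseteq\{1,\dots,n\}$ let $\sigma(S)$ be the sum of its elements; $S$ is called even if $\sigma(S)$ is even and odd otherwise (the empty set is even). A $k$-set is a subset with $k$ elements. $e(n,k)$ denotes the number of even $k$-subsets of $\{1,2,\dots,n\}$ and $o(n,k)$ the number of odd $k$-subsets of $\{1,2,\dots,n\}$ (both are $0$ if $k>n$). *)

From mathcomp Require Import all_boot all_order all_algebra.
Set Implicit Arguments. Unset Strict Implicit. Unset Printing Implicit Defensive.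

(* Subsets of {1,...,n} are represented as S : {set 'I_n}, where the ordinal
   i : 'I_n stands for the integer i+1. *)
Definition sigma (n : nat) (S : {set 'I_n}) : nat := \sum_(i in S) (i.+1).

Definition e (n k : nat) : nat :=
  #|[set S : {set 'I_n} | (#|S| == k) && ~~ odd (sigma S)]|.
Definition o (n k : nat) : nat :=
  #|[set S : {set 'I_n} | (#|S| == k) && odd (sigma S)]|.

Definition ez (n : nat) (k : int) : nat :=
  match k with Posz k => e n k | Negz _ => 0 end.
Definition oz (n : nat) (k : int) : nat :=
  match k with Posz k => o n k | Negz _ => 0 end.
Definition binz (n : nat) (k : int) : nat :=
  match k with Posz k => 'C(n, k) | Negz _ => 0 end.

(* Split the k-subsets of {1..n+2} according to which of the two largest
   elements n+1, n+2 they contain.  With neither, the parity is that of a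
   k-subset of {1..n}; with both, the sum grows by the odd number 2n+3, so the
   parity flips on a (k-2)-subset of {1..n}; with exactly one, the elements
   n+1 and n+2 have opposite parities, so each (k-1)-subset of {1..n} yields
   exactly one even and one odd k-subset, contributing 'C(n, k-1) to both. *)

From mathcomp Require Import all_boot all_order all_algebra.
From mathcomp Require Import zify.
Set Implicit Arguments. Unset Strict Implicit. Unset Printing Implicit Defensive.

Definition ksets_par (n k : nat) (p : bool) : nat :=
  \sum_(S : {set 'I_n}) ((#|S| == k) && (odd (sigma S) == p)).

Lemma card_ksets_par (n k : nat) (p : bool) :
  #|[set S : {set 'I_n} | (#|S| == k) && (odd (sigma S) == p)]| = ksets_par n k p.
Proof.
rewrite -sum1_card /ksets_par big_mkcond /=.
by apply: eq_bigr => S _; rewrite inE; case: ifP.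
Qed.

Lemma e_ksets_par (n k : nat) : e n k = ksets_par n k false.
Proof. by rewrite -card_ksets_par; apply: eq_card => S; rewrite !inE; case: odd. Qed.

Lemma o_ksets_par (n k : nat) : o n k = ksets_par n k true.
Proof. by rewrite -card_ksets_par; apply: eq_card => S; rewrite !inE; case: odd. Qed.

Lemma ksets_par_bin (n k : nat) (p : bool) :
  ksets_par n k p + ksets_par n k (~~ p) = 'C(n, k).
Proof.
rewrite /ksets_par -big_split -[n in 'C(n, _)]card_ord -card_draws -sum1_card.
rewrite [RHS]big_mkcond; apply: eq_bigr => S _ /=.
by rewrite inE; case: (_ == k); case: odd; case: p.
Qed.

Section ExtendByMax.

Variable n : nat.

Definition extend (b : bool) (T : {set 'I_n}) : {set 'I_n.+1} :=
  if b then ord_max |: (lift ord_max @: T) else lift ord_max @: T.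

Lemma max_notin_lift (T : {set 'I_n}) : ord_max \notin lift ord_max @: T.
Proof. by apply/imsetP => -[j _ /eqP]; rewrite (negbTE (neq_lift _ _)). Qed.

Lemma mem_max_extend b T : (ord_max \in extend b T) = b.
Proof.
by case: b; rewrite /extend ?setU11 //; apply/negbTE/max_notin_lift.
Qed.

Lemma mem_lift_extend b T j : (lift ord_max j \in extend b T) = (j \in T).
Proof.
have mem_lift := mem_imset (mem T) j (@lift_inj _ ord_max).
by case: b; rewrite /extend ?in_setU1 mem_lift // eq_sym (negbTE (neq_lift _ _)).
Qed.

Lemma extend_bij : bijective (fun bT : bool * {set 'I_n} => extend bT.1 bT.2).
Proof.
exists (fun S : {set 'I_n.+1} => (ord_max \in S, @lift n.+1 ord_max @^-1: S)).
  case=> b T /=; rewrite mem_max_extend; congr pair.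
  by apply/setP => j; rewrite inE mem_lift_extend.
move=> S /=; apply/setP => i; case: (unliftP ord_max i) => [j ->|->].
  by rewrite mem_lift_extend inE.
by rewrite mem_max_extend.
Qed.

Lemma card_extend b T : #|extend b T| = b + #|T|.
Proof.
rewrite /extend; case: b; rewrite ?cardsU1 ?max_notin_lift card_imset //;
  exact: lift_inj.
Qed.

Lemma sigma_extend b T : sigma (extend b T) = b * n.+1 + sigma T.
Proof.
have sigma_lift : sigma (lift ord_max @: T) = sigma T.
  rewrite /sigma big_imset /=; last by move=> x y _ _; apply: lift_inj.
  by apply: eq_bigr => i _; rewrite /= /bump leqNgt ltn_ord.
case: b; rewrite /extend ?mul0n ?mul1n -sigma_lift //.
by rewrite /sigma big_setU1 ?max_notin_lift.
Qed.

End ExtendByMax.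

Lemma ksets_par_extend (n k : nat) (p : bool) :
  ksets_par n.+1 k p = \sum_(b : bool) \sum_(T : {set 'I_n})
    ((b + #|T| == k) && (odd (b * n.+1 + sigma T) == p)).
Proof.
rewrite /ksets_par (reindex _ (onW_bij _ (extend_bij n))) pair_bigA /=.
by apply: eq_bigr => -[b T] _; rewrite card_extend sigma_extend.
Qed.

Lemma ksets_par_S0 (n : nat) (p : bool) : ksets_par n.+1 0 p = ksets_par n 0 p.
Proof. by rewrite ksets_par_extend big_bool /= big1 // => T _; rewrite add1n. Qed.

Lemma ksets_par_SS (n k : nat) (p : bool) :
  ksets_par n.+1 k.+1 p = ksets_par n k.+1 p + ksets_par n k (p (+) odd n.+1).
Proof.
rewrite ksets_par_extend big_bool addnC; congr (_ + _).
apply: eq_bigr => T _; rewrite add1n eqSS mul1n oddD /=.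
by case: (odd n); case: odd; case: p.
Qed.

Lemma ksets_par_S2S2 (n k : nat) (p : bool) :
  ksets_par n.+2 k.+2 p = ksets_par n k.+2 p + 'C(n, k.+1) + ksets_par n k (~~ p).
Proof.
rewrite !ksets_par_SS /= -(ksets_par_bin n k.+1 (p (+) ~~ odd n)).
by case: p; case: (odd n) => /=; lia.
Qed.

Lemma ksets_par_S2_1 (n : nat) (p : bool) :
  ksets_par n.+2 1 p = ksets_par n 1 p + 1.
Proof.
rewrite !ksets_par_SS !ksets_par_S0 /= -(bin0 n) -(ksets_par_bin n 0 (p (+) ~~ odd n)).
by case: p; case: (odd n) => /=; lia.
Qed.

Theorem lemma1p1 (n k : nat) : 2 <= n ->
  ez n k = (ez (n - 2) k + binz (n - 2) (k%:Z - 1) + oz (n - 2) (k%:Z - 2))%N /\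
  oz n k = (oz (n - 2) k + binz (n - 2) (k%:Z - 1) + ez (n - 2) (k%:Z - 2))%N.
Proof.
case: n => [|[|m]] // _; rewrite subn2 /=.
case: k => [|[|k]].
- by rewrite /= !e_ksets_par !o_ksets_par !ksets_par_S0 !addn0.
- by rewrite /= !e_ksets_par !o_ksets_par !ksets_par_S2_1 subnn bin0 !addn0.
have -> : (k.+2%:Z - 1 = k.+1)%R by lia.
have -> : (k.+2%:Z - 2 = k)%R by lia.
by rewrite /= !e_ksets_par !o_ksets_par !ksets_par_S2S2.
Qed.
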